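(* Let $G=(V,E)$ be a directed graph on $n$ nodes in which every node has a self-loop, let $P$ be an $n\times n$ right stochastic matrix supported on the edges of $G$, let $D$ be diagonal with entries $D_{uu}=p_{uu'}\in[0,1]$, $\tilde P=(\mathbf I_n-D)P$, $p^{(t)}_{uv}=(P^t)_{uv}$, $\tilde p^{(t)}_{uv}=(\tilde P^t)_{uv}$. For $u\neq w$ define $\pi_{uw}=\sum_{t\ge1}\tilde p^{(t)}_{uw}\,p_{ww'}$. Then for all $u\neq w$ in $V$, $$(1-p_{uu'})\Big(\sum_{t\ge1}\big(\min_{x\in V}(1-p_{xx'})\big)^{t-1}p^{(t)}_{uw}\Big)p_{ww'}\ \le\ \pi_{uw}\ \le\ (1-p_{uu'})\Big(\sum_{t\ge1}\big(\max_{x\in V}(1-p_{xx'})\big)^{t-1}p^{(t)}_{uw}\Big)p_{ww'}.$$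
   Context: $p_{uu'}$ is the probability that a random walker at $u$ is absorbed at an auxiliary absorbing node $u'$; $\pi_{uw}$ is the probability that a walker started at $u$ is eventually absorbed at (the auxiliary node of) $w$. *)

From HB Require Import structures.
From mathcomp Require Import all_boot all_order all_algebra.
From mathcomp Require Import all_classical all_reals.
From mathcomp Require Import ereal sequences.
Set Implicit Arguments. Unset Strict Implicit. Unset Printing Implicit Defensive.
Import Order.TTheory GRing.Theory Num.Theory.
Local Open Scope ring_scope.

Definition has_self_loops n (e : rel 'I_n) : Prop := forall u, e u u.

Definition right_stochastic (R : realType) n (P : 'M[R]_n) : Prop :=
  (forall u v, 0 <= P u v) /\ (forall u, \sum_v P u v = 1).

Definition supported_on (R : realType) n (P : 'M[R]_n) (e : rel 'I_n) : Prop :=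
  forall u v, P u v != 0 -> e u v.

(* D = diag(p_{uu'}), given by the vector of absorption probabilities d *)
Definition Dmat (R : realType) n (d : 'I_n -> R) : 'M[R]_n :=
  diag_mx (\row_u d u).

Definition Ptilde (R : realType) n (P : 'M[R]_n) (d : 'I_n -> R) : 'M[R]_n :=
  (1%:M - Dmat d) *m P.

Definition absorb_prob (R : realType) n (P : 'M[R]_n) (d : 'I_n -> R)
    (u w : 'I_n) : \bar R :=
  (\sum_(1 <= t <oo) (((Ptilde P d) ^+ t) u w)%:E * (d w)%:E)%E.

From mathcomp Require Import all_boot all_order all_algebra.
From mathcomp Require Import all_classical all_reals.
From mathcomp Require Import ereal sequences.
Import Order.TTheory GRing.Theory Num.Theory.
Local Open Scope ring_scope.

(* P~ = (I - D) P lies entrywise between m P and M P, and on nonnegative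
   matrices products and powers are monotone entrywise; so writing
   P~^(t+1) = (I - D) (P P~^t) keeps the first factor 1 - p_uu' exact and
   squeezes P P~^t between m^t P^(t+1) and M^t P^(t+1).  The t = 0 terms of
   the series vanish because u <> w. *)

Section NonnegMatrices.
Context {R : numDomainType} {n : nat}.
Implicit Types A B : 'M[R]_n.

Definition nonneg_mx A := forall i j, 0 <= A i j.

Definition le_mx A B := forall i j, A i j <= B i j.

Lemma nonneg_mxM A B : nonneg_mx A -> nonneg_mx B -> nonneg_mx (A *m B).
Proof. by move=> A0 B0 i j; rewrite mxE sumr_ge0 // => k _; rewrite mulr_ge0. Qed.

Lemma nonneg_mxX A t : nonneg_mx A -> nonneg_mx (A ^+ t).
Proof.
move=> A0; elim: t => [|t IHt] i j; first by rewrite expr0 mxE ler0n.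
by rewrite exprS; apply: nonneg_mxM.
Qed.

Lemma scalemxXn (c : R) A t : (c *: A) ^+ t = c ^+ t *: A ^+ t.
Proof.
elim: t => [|t IHt]; first by rewrite !expr0 scale1r.
by rewrite !exprS IHt -!mulmxE -scalemxAr -scalemxAl scalerA mulrC.
Qed.

Lemma le_mxM A A' B B' : nonneg_mx A -> nonneg_mx B ->
  le_mx A A' -> le_mx B B' -> le_mx (A *m B) (A' *m B').
Proof.
move=> A0 B0 leAA' leBB' i j; rewrite !mxE; apply: ler_sum => k _.
exact: ler_pM.
Qed.

Lemma le_mxX A B t : nonneg_mx A -> le_mx A B -> le_mx (A ^+ t) (B ^+ t).
Proof.
move=> A0 leAB; elim: t => [|t IHt]; first by [].
by rewrite !exprS; apply: le_mxM => //; apply: nonneg_mxX.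
Qed.

End NonnegMatrices.

Lemma nneseriesZlr (R : realType) (a b : R) (f : nat -> R) (N : nat) :
  0 <= a -> 0 <= b -> (forall t, 0 <= f t) ->
  (a%:E * (\sum_(N <= t <oo) (f t)%:E) * b%:E =
   \sum_(N <= t <oo) (a * f t * b)%:E)%E.
Proof.
move=> a0 b0 f0; rewrite -nneseriesZl; last by move=> t _; rewrite lee_fin.
rewrite muleC -nneseriesZl; last by move=> t _; rewrite lee_fin mulr_ge0.
by apply: eq_eseriesr => t _; rewrite -!EFinM mulrC.
Qed.

Section AbsorbingWalk.
Variables (R : realType) (n : nat) (P : 'M[R]_n) (d : 'I_n -> R).
Hypothesis P_ge0 : nonneg_mx P.
Hypothesis stay_ge0 : forall x, 0 <= 1 - d x.

Lemma PtildeE x z : Ptilde P d x z = (1 - d x) * P x z.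
Proof. by rewrite /Ptilde /Dmat mulmxBl mul1mx mul_diag_mx !mxE mulrBl mul1r. Qed.

Lemma nonneg_Ptilde : nonneg_mx (Ptilde P d).
Proof. by move=> x z; rewrite PtildeE mulr_ge0. Qed.

Lemma Ptilde_exprSE t x y :
  (Ptilde P d ^+ t.+1) x y = (1 - d x) * (P *m Ptilde P d ^+ t) x y.
Proof.
rewrite exprS !mxE mulr_sumr; apply: eq_bigr => z _.
by rewrite PtildeE mulrA.
Qed.

Lemma scaled_exprSE (c : R) t x y :
  c ^+ t * (P ^+ t.+1) x y = (P *m (c *: P) ^+ t) x y.
Proof. by rewrite scalemxXn -scalemxAr mxE exprS. Qed.

Lemma Ptilde_exprS_le (c : R) t x y : (forall z, 1 - d z <= c) ->
  (Ptilde P d ^+ t.+1) x y <= (1 - d x) * (c ^+ t * (P ^+ t.+1) x y).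
Proof.
move=> le_c; rewrite Ptilde_exprSE scaled_exprSE ler_wpM2l //.
have le_Pt : le_mx (Ptilde P d) (c *: P).
  by move=> i j; rewrite PtildeE mxE ler_wpM2r.
apply: le_mxM => //; first exact/nonneg_mxX/nonneg_Ptilde.
exact/le_mxX/le_Pt/nonneg_Ptilde.
Qed.

Lemma Ptilde_exprS_ge (c : R) t x y : 0 <= c -> (forall z, c <= 1 - d z) ->
  (1 - d x) * (c ^+ t * (P ^+ t.+1) x y) <= (Ptilde P d ^+ t.+1) x y.
Proof.
move=> c_ge0 ge_c; rewrite Ptilde_exprSE scaled_exprSE ler_wpM2l //.
have cP_ge0 : nonneg_mx (c *: P) by move=> i j; rewrite mxE mulr_ge0.
have le_cP : le_mx (c *: P) (Ptilde P d).
  by move=> i j; rewrite PtildeE mxE ler_wpM2r.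
apply: le_mxM => //; first exact/nonneg_mxX/cP_ge0.
exact/le_mxX/le_cP.
Qed.

End AbsorbingWalk.

Theorem lemma3 (R : realType) (n : nat) (e : rel 'I_n) (P : 'M[R]_n)
    (d : 'I_n -> R) :
  has_self_loops e ->
  right_stochastic P ->
  supported_on P e ->
  (forall x, 0 <= d x <= 1) ->
  forall u w : 'I_n, u != w ->
  let m := \big[Num.min/(1 - d u)]_(x : 'I_n) (1 - d x) in
  let M := \big[Num.max/(1 - d u)]_(x : 'I_n) (1 - d x) in
  ((1 - d u)%:E * (\sum_(1 <= t <oo) (m ^+ t.-1 * (P ^+ t) u w)%:E) * (d w)%:E
     <= absorb_prob P d u w)%E /\
  (absorb_prob P d u w
     <= (1 - d u)%:E * (\sum_(1 <= t <oo) (M ^+ t.-1 * (P ^+ t) u w)%:E) * (d w)%:E)%E.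
Proof.
move=> _ [P_ge0 _] _ d_in01 u w neq_uw m M.
have stay_ge0 x : 0 <= 1 - d x by rewrite subr_ge0; case/andP: (d_in01 x).
have dw_ge0 : 0 <= d w by case/andP: (d_in01 w).
have m_le x : m <= 1 - d x by apply: bigmin_le.
have M_ge x : 1 - d x <= M by apply: le_bigmax.
have m_ge0 : 0 <= m by apply: le_bigmin.
have M_ge0 : 0 <= M by apply: le_trans (M_ge u).
have term_ge0 c : 0 <= c -> forall t, 0 <= c ^+ t.-1 * (P ^+ t) u w.
  by move=> c_ge0 t; rewrite mulr_ge0 ?exprn_ge0 ?nonneg_mxX.
have off_diag0 (A : 'M[R]_n) : (A ^+ 0) u w = 0.
  by rewrite expr0 mxE (negbTE neq_uw).
rewrite /absorb_prob !nneseriesZlr //; [|exact: term_ge0..].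
split; apply: lee_nneseries => [t _ _|[|t] _]; rewrite -?EFinM ?lee_fin.
- by rewrite !mulr_ge0 ?exprn_ge0 ?nonneg_mxX.
- by rewrite !off_diag0 !mulr0 mul0r.
- by rewrite ler_wpM2r //; apply: Ptilde_exprS_ge.
- by rewrite mulr_ge0 //; apply/nonneg_mxX/nonneg_Ptilde.
- by rewrite !off_diag0 !mulr0 mul0r.
- by rewrite ler_wpM2r //; apply: Ptilde_exprS_le.
Qed.
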